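(* Let $n\ge 4$ and let $\mathcal M$ be an IP-SEG* model which is an IP-SEG representation of the chordless cycle $C_n$ and contains at least one interval segment. Then the (unique) permutation arc of $\mathcal M$ consists of at least $2$ and at most $4$ permutation segments.
   Context: Let $L_1$ and $L_2$ be two distinct parallel horizontal lines in the plane. A closed straight line segment is an interval segment if both of its endpoints lie on the same line $L_i$, and a permutation segment if one endpoint lies on $L_1$ and the other on $L_2$. An IP-SEG model is a finite family of interval and permutation segments; its intersection graph has one vertex per segment, adjacent iff the segments intersect. An IP-SEG* model is an IP-SEG model in which all interval segments lie on the same line $L_i$. For $m\ge 3$, $C_m$ is the chordless cycle on $v_1,\dots,v_m$ with $v_i$ adjacent to $v_{i+1}$ (indices mod $m$) and no other edges. An IP-SEG representation of $C_m$ is an IP-SEG model with segments $s(v_1),\dots,s(v_m)$ whose intersection graph is $C_m$ with $s(v_i)$ corresponding to $v_i$. A permutation arc is a maximal sequence of cyclically consecutive segments $s(v_i),\dots,s(v_j)$ that are all permutation segments; an interval arc is defined analogously with interval segments. *)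

From HB Require Import structures.
From mathcomp Require Import all_boot all_order all_algebra.
Set Implicit Arguments. Unset Strict Implicit. Unset Printing Implicit Defensive.
Import Order.TTheory GRing.Theory Num.Theory.
Local Open Scope ring_scope.

Section Geo.
Variable R : realFieldType.

Record seg := Seg { ep1 : R * R; ep2 : R * R }.

Definition on_seg (s : seg) (p : R * R) : Prop :=
  exists t : R, 0 <= t <= 1 /\
    p = ((1 - t) * (ep1 s).1 + t * (ep2 s).1, (1 - t) * (ep1 s).2 + t * (ep2 s).2).

Definition seg_meet (s s' : seg) : Prop := exists p, on_seg s p /\ on_seg s' p.

(* L_1 is the horizontal line y = y1, L_2 is y = y2 *)
Definition interval_seg_on (y : R) (s : seg) : Prop :=
  (ep1 s).2 = y /\ (ep2 s).2 = y /\ ep1 s <> ep2 s.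

Definition interval_seg (y1 y2 : R) (s : seg) : Prop :=
  interval_seg_on y1 s \/ interval_seg_on y2 s.

Definition perm_seg (y1 y2 : R) (s : seg) : Prop :=
  ((ep1 s).2 = y1 /\ (ep2 s).2 = y2) \/ ((ep1 s).2 = y2 /\ (ep2 s).2 = y1).

Definition ipseg_model (I : Type) (y1 y2 : R) (s : I -> seg) : Prop :=
  forall i, interval_seg y1 y2 (s i) \/ perm_seg y1 y2 (s i).

Definition ipseg_star_model (I : Type) (y1 y2 : R) (s : I -> seg) : Prop :=
  ipseg_model y1 y2 s /\
  exists y, (y = y1 \/ y = y2) /\
    forall i, interval_seg y1 y2 (s i) -> interval_seg_on y (s i).

(* s is an IP-SEG representation of C_n (vertices v_1..v_n as 'I_n,
   v_i adjacent to v_{i+1 mod n}) *)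
Definition represents_cycle (n : nat) (s : 'I_n -> seg) : Prop :=
  forall i j : 'I_n, i != j ->
    (seg_meet (s i) (s j) <->
      (val j = ((val i).+1 %% n)%N \/ val i = ((val j).+1 %% n)%N)).

Definition perm_at (n : nat) (y1 y2 : R) (s : 'I_n -> seg) (t : nat) : Prop :=
  forall o : 'I_n, val o = (t %% n)%N -> perm_seg y1 y2 (s o).

Definition perm_arc (n : nat) (y1 y2 : R) (s : 'I_n -> seg) (i k : nat) : Prop :=
  (i < n)%N /\ (0 < k <= n)%N /\
  (forall t, (t < k)%N -> perm_at y1 y2 s (i + t)) /\
  ((k < n)%N -> ~ perm_at y1 y2 s (i + n - 1) /\ ~ perm_at y1 y2 s (i + k)).

End Geo.

From HB Require Import structures.
From mathcomp Require Import all_boot all_order all_algebra.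
From mathcomp Require Import ring lra zify.
From Stdlib Require Import Classical_Prop.
Import Order.TTheory GRing.Theory Num.Theory.

Set Implicit Arguments. Unset Strict Implicit. Unset Printing Implicit Defensive.

(* Put the interval segments on the line y = yI and call yO the other line.
   A permutation segment x cuts the strip between the lines in two; a segment
   avoiding x lies strictly on one side of it, segments on opposite sides are
   disjoint, so the connected part of the cycle avoiding x (the segments at
   cyclic distance 2, ..., n - 2 from x) lies on a single side: this side is
   the orientation of x.  Two permutation segments at distance in [2, n - 2]
   lie on each other's far sides, hence have opposite orientations; the two
   segments of a permutation arc of length 2 also do, because the interval
   segments around the arc contain the two feet.  As three orientations
   cannot pairwise differ, the permutation segments form a single arc of
   length at most 4; an arc of length 1 is impossible (its two interval
   neighbours would meet at its foot) and some permutation segment exists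
   (otherwise the neighbours of the interval with leftmost right end meet). *)

Section CyclicArcs.
Variables (n : nat) (Q : nat -> Prop).
Hypothesis n_gt0 : 0 < n.
Hypothesis Q_periodic : forall a b, a %% n = b %% n -> Q a -> Q b.

Definition arc (i k : nat) : Prop :=
  i < n /\ 0 < k <= n /\ (forall t, t < k -> Q (i + t)) /\
  (k < n -> ~ Q (i + n - 1) /\ ~ Q (i + k)).

Lemma forward_step a b : exists d, d < n /\ (a + d) %% n = b %% n.
Proof.
exists ((b + (n - a %% n)) %% n); split; first by rewrite ltn_pmod.
rewrite modnDmr -modnDml addnCA subnKC ?modnDr //.
by apply: ltnW; rewrite ltn_pmod.
Qed.

Lemma arc_of_block i k : i < n -> 0 < k < n ->
  (forall t, t < k -> Q (i + t)) -> (forall d, d < n -> Q (i + d) -> d < k) ->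
  arc i k /\ forall i' k', arc i' k' -> i' = i /\ k' = k.
Proof.
move=> i_lt /andP[k_gt0 k_lt] block bound.
have last_out : ~ Q (i + n - 1).
  by rewrite -addnBA // => /bound; lia.
have next_out : ~ Q (i + k) by move/bound; lia.
split; first by do !split => //; lia.
move=> i' k' [i'_lt [/andP[k'_gt0 k'_le] [block' ends']]].
have k'_lt : k' < n.
  rewrite ltn_neqAle k'_le andbT; apply/eqP => k'n; apply: last_out.
  have [d [d_lt hd]] := forward_step i' (i + n - 1).
  by apply: Q_periodic hd _; apply: block'; rewrite k'n.
have [prev_out' next_out'] := ends' k'_lt.
have [d [d_lt hd]] := forward_step i i'.
have d_k : d < k.
  apply: bound => //; apply: Q_periodic (esym hd) _.
  by rewrite -[i']addn0; apply: block'.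
have d0 : d = 0.
  case: d d_lt hd d_k => // d d_lt hd d_k; case: prev_out'.
  apply: (Q_periodic (a := i + d)); last by apply: block; lia.
  rewrite -addnBA // -[RHS]modnDml -hd modnDml -(modnDr (i + d) n); congr (_ %% _); lia.
move: hd; rewrite d0 addn0 !modn_small // => ii'; subst i'.
split=> //; case: (ltngtP k' k) => // [lt|gt].
- by case: next_out'; apply: block.
- by case: next_out; apply: block'.
Qed.

Lemma arc_start : (exists t, Q t) -> (exists t, ~ Q t) ->
  exists i, i < n /\ Q i /\ ~ Q (i + n - 1).
Proof.
move=> [j Qj] [k0 nQk0]; apply: NNPP => no_start.
have succ_out t : ~ Q t -> ~ Q t.+1.
  move=> nQt Qt1; apply: no_start; exists (t.+1 %% n); split; first exact: ltn_pmod.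
  split; first by apply: Q_periodic Qt1; rewrite modn_mod.
  move=> Qprev; apply: nQt; apply: Q_periodic Qprev.
  rewrite -addnBA // modnDml -(modnDr t n); congr (_ %% _); lia.
have all_out d : ~ Q (k0 + d) by elim: d => [|d IH]; rewrite ?addn0 ?addnS //; apply: succ_out.
have [d [_ hd]] := forward_step k0 j.
by apply: (all_out d); apply: Q_periodic (esym hd) Qj.
Qed.

Variable orient : nat -> Prop.
Hypothesis n_ge4 : 3 < n.
Hypothesis Q_somewhere : exists t, Q t.
Hypothesis Q_not_everywhere : exists t, ~ Q t.
Hypothesis Q_no_singleton : forall t, Q t -> ~ Q (t + n - 1) -> Q (t + 1).
Hypothesis flip_far : forall x e, Q x -> Q (x + e) -> 2 <= e <= n - 2 ->
  (orient x <-> ~ orient (x + e)).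
Hypothesis flip_pair : forall i, Q i -> Q (i + 1) -> ~ Q (i + n - 1) -> ~ Q (i + 2) ->
  (orient i <-> ~ orient (i + 1)).

Lemma unique_short_arc : exists i k, arc i k /\ 2 <= k <= 4 /\
  forall i' k', arc i' k' -> i' = i /\ k' = k.
Proof.
have [i [i_lt [Qi prev_out]]] := arc_start Q_somewhere Q_not_everywhere.
have Qi1 := Q_no_singleton Qi prev_out.
have not_last d : Q (i + d) -> d != n - 1.
  by apply: contraPneq => ->; rewrite addnBA.
(* Once two positions i, i + j of opposite orientations are known, no later
   position of the cycle can satisfy Q: it would be at distance in [2, n - 2]
   from both, and three orientations cannot pairwise differ. *)
have far_out j : Q (i + j) -> (orient i <-> ~ orient (i + j)) ->
    forall d, j + 2 <= d < n -> ~ Q (i + d).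
  move=> Qj flip_ij d /andP[jd dn] Qd; have := not_last d Qd => dn1.
  have fi := flip_far Qi Qd ltac:(lia).
  have fj := @flip_far (i + j) (d - j) Qj.
  rewrite -addnA subnKC in fj; last by lia.
  by have := fj Qd ltac:(lia); tauto.
have block_arc k : 2 <= k <= 4 -> k < n -> (forall t, t < k -> Q (i + t)) ->
    (forall d, d < n -> Q (i + d) -> d < k) ->
    exists i0 k0, arc i0 k0 /\ 2 <= k0 <= 4 /\ forall i' k', arc i' k' -> i' = i0 /\ k' = k0.
  move=> k24 kn block bound; have hk : 0 < k < n by lia.
  by have [a u] := arc_of_block i_lt hk block bound; exists i, k.
case: (classic (Q (i + 2))) => Qi2.
  have flip2 := flip_far Qi Qi2 ltac:(lia).
  case: (classic (Q (i + 3))) => Qi3.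
    have n5 : 4 < n by have := not_last 3 Qi3; lia.
    apply: (block_arc 4) => //.
    - by case=> [|[|[|[|t]]]] //; rewrite ?addn0.
    - move=> d dn Qd; rewrite ltnNge; apply/negP => d4.
      by apply: (far_out 2 Qi2 flip2 d) => //; lia.
  apply: (block_arc 3 _ ltac:(lia)) => //.
  - by case=> [|[|[|t]]] //; rewrite ?addn0.
  - move=> d dn Qd; rewrite ltnNge; apply/negP => d3.
    have d_ne3 : d != 3 by apply: contraPneq Qd => ->.
    by apply: (far_out 2 Qi2 flip2 d) => //; lia.
apply: (block_arc 2 _ ltac:(lia)) => //.
- by case=> [|[|t]] //; rewrite ?addn0.
- move=> d dn Qd; rewrite ltnNge; apply/negP => d2.
  have d_ne2 : d != 2 by apply: contraPneq Qd => ->.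
  by apply: (far_out 1 Qi1 (flip_pair Qi Qi1 prev_out Qi2) d) => //; lia.
Qed.
End CyclicArcs.

Lemma arc_iff (n : nat) (Q Q' : nat -> Prop) (i k : nat) :
  (forall t, Q t <-> Q' t) -> arc n Q i k -> arc n Q' i k.
Proof.
move=> QQ' [i_lt [k_range [block ends]]]; do 2!split => //.
split=> [t /block /QQ' // | /ends [prev_out next_out]].
by split=> /QQ'.
Qed.

Lemma offset_mod_inj (m t a b : nat) : (a < m)%N -> (b < m)%N ->
  ((t + a) %% m == (t + b) %% m) = (a == b).
Proof. by move=> am bm; rewrite eqn_modDl !modn_small. Qed.

Section CycleRepresentation.
Variables (R : realFieldType) (n : nat) (s : 'I_n.+1 -> seg R).
Hypothesis n_gt0 : (0 < n)%N.
Hypothesis cyc : represents_cycle s.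

Local Notation V t := (s (inZp t)).

Lemma cycle_periodic a b : (a %% n.+1 = b %% n.+1)%N -> V a = V b.
Proof. by move=> e; congr s; apply: val_inj. Qed.

Lemma cycle_adj t : seg_meet (V t) (V t.+1).
Proof.
have ne : inZp t != inZp t.+1 :> 'I_n.+1.
  apply/eqP => /(congr1 val) /= /eqP.
  by rewrite -[t in t %% _]addn0 -[t.+1]addn1 offset_mod_inj //; lia.
apply/(cyc ne); left => /=.
by rewrite -[(t %% _).+1]addn1 modnDml addn1.
Qed.

Lemma cycle_far t e : (2 <= e <= n.+1 - 2)%N -> ~ seg_meet (V t) (V (t + e)).
Proof.
move=> he meet.
have ne : inZp t != inZp (t + e) :> 'I_n.+1.
  apply/eqP => /(congr1 val) /= /eqP.
  by rewrite -[t in t %% _]addn0 offset_mod_inj //; lia.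
case: ((cyc ne).1 meet) => /= /eqP.
- by rewrite -[(t %% _).+1]addn1 modnDml offset_mod_inj //; lia.
- rewrite -[(_ %% _).+1]addn1 modnDml -addnA -[t in t %% _]addn0.
  by rewrite offset_mod_inj //; lia.
Qed.
End CycleRepresentation.

Local Open Scope ring_scope.

Lemma convex_root (R : realFieldType) (d1 d2 : R) :
  (exists t, 0 <= t <= 1 /\ (1 - t) * d1 + t * d2 = 0) <-> d1 * d2 <= 0.
Proof.
split=> [[t [/andP[t0 t1] e]]|le0].
  have e2 : t * (d1 * d2) = - ((1 - t) * (d1 * d1)).
    have : d1 * ((1 - t) * d1 + t * d2) = 0 by rewrite e mulr0.
    by move=> h; apply/eqP; rewrite -subr_eq0 -h; apply/eqP; ring.
  case: (ltP 0 t) => tp; first nra.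
  have t0' : t = 0 by lra.
  by move: e; rewrite t0' subr0 mul1r mul0r addr0 => ->; rewrite mul0r.
have [e|ne] := eqVneq d1 d2.
  rewrite e in le0 *.
  have d2z : d2 = 0.
    by apply/eqP; rewrite -sqrf_eq0 eq_le sqr_ge0 andbT expr2.
  by exists 0; split; [lra | rewrite d2z; ring].
have dpos : 0 < (d1 - d2) ^+ 2 by rewrite exprn_even_gt0 // subr_eq0.
exists (d1 * (d1 - d2) / (d1 - d2) ^+ 2); split.
  by rewrite divr_ge0 ?ler_pdivrMr ?mul1r ?(ltW dpos) //=; nra.
by field; rewrite subr_eq0.
Qed.

Lemma perm_seg_sym (R : realFieldType) (a b : R) (s : seg R) :
  perm_seg a b s <-> perm_seg b a s.
Proof. by rewrite /perm_seg; tauto. Qed.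

Section PlanarGeometry.
Variables (R : realFieldType) (yI yO : R).
Hypothesis yIO : yI != yO.

Definition foot (s : seg R) : R := if (ep1 s).2 == yI then (ep1 s).1 else (ep2 s).1.
Definition top (s : seg R) : R := if (ep1 s).2 == yI then (ep2 s).1 else (ep1 s).1.

Definition lo (s : seg R) : R := Order.min (ep1 s).1 (ep2 s).1.
Definition hi (s : seg R) : R := Order.max (ep1 s).1 (ep2 s).1.

Lemma lo_le_hi (s : seg R) : lo s <= hi s.
Proof. by rewrite /lo /hi minEle maxEle; case: ifP => //; lra. Qed.

Lemma height_inj (t t' : R) :
  (1 - t) * yI + t * yO = (1 - t') * yI + t' * yO -> t = t'.
Proof.
move=> e; apply/eqP; rewrite -subr_eq0.
have yOI : yO - yI != 0 by rewrite subr_eq0 eq_sym.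
have : (t - t') * (yO - yI) = 0 by move: e; lra.
by move/eqP; rewrite mulf_eq0 (negbTE yOI) orbF.
Qed.

Lemma on_perm_seg (s : seg R) p : perm_seg yI yO s ->
  on_seg s p <-> exists t, 0 <= t <= 1 /\
    p = ((1 - t) * foot s + t * top s, (1 - t) * yI + t * yO).
Proof.
case: s => [[x1 z1] [x2 z2]]; rewrite /perm_seg /on_seg /foot /top /=.
case=> [[-> ->]|[-> ->]]; first by rewrite eqxx.
rewrite eq_sym (negbTE yIO).
by split=> -[t [ht ->]]; exists (1 - t); (split; [lra | congr (_, _); ring]).
Qed.

Lemma on_interval_seg (s : seg R) p : interval_seg_on yI s ->
  on_seg s p <-> p.2 = yI /\ lo s <= p.1 <= hi s.
Proof.
case: s => [[x1 z1] [x2 z2]]; rewrite /interval_seg_on /on_seg /lo /hi /=.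
move=> [-> [-> hne]]; rewrite minEle maxEle.
have x12 : x1 != x2 by apply/eqP => e; apply: hne; rewrite e.
split=> [[t [/andP[t0 t1] ->]] /=|].
  by split; [ring | case: (leP x1 x2) => h; apply/andP; split; nra].
case: p => [px py] /= [-> hb].
have d12 : x2 - x1 != 0 by rewrite subr_eq0 eq_sym.
exists ((px - x1) / (x2 - x1)); split; last by congr (_, _); field.
move: hb; case: (leP x1 x2) => [le12 hb|lt21 hb].
- have lt12 : 0 < x2 - x1 by rewrite subr_gt0 lt_neqAle x12.
  by rewrite divr_ge0 ?ler_pdivrMr ?mul1r /=; lra.
- have lt12 : 0 < x1 - x2 by rewrite subr_gt0.
  rewrite -[px - x1]opprB -[x2 - x1]opprB invrN mulrNN.
  by rewrite divr_ge0 ?ler_pdivrMr ?mul1r /=; lra.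
Qed.

Lemma meet_perm_perm (s u : seg R) : perm_seg yI yO s -> perm_seg yI yO u ->
  seg_meet s u <-> (foot s - foot u) * (top s - top u) <= 0.
Proof.
move=> hs hu; rewrite -convex_root; split.
- move=> [p [/(on_perm_seg _ hs) [t [ht ->]] /(on_perm_seg _ hu) [t' [ht' [ex ey]]]]].
  by rewrite -(height_inj ey) in ex; exists t; split => //; lra.
- move=> [t [ht e]]; exists ((1 - t) * foot s + t * top s, (1 - t) * yI + t * yO).
  split; [apply/(on_perm_seg _ hs) | apply/(on_perm_seg _ hu)]; exists t; split => //.
  by congr (_, _); lra.
Qed.

Lemma meet_perm_interval (s u : seg R) : perm_seg yI yO s -> interval_seg_on yI u ->
  seg_meet s u <-> lo u <= foot s <= hi u.
Proof.
move=> hs hu; split.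
- move=> [p [/(on_perm_seg _ hs) [t [ht ->]] /(on_interval_seg _ hu) /= [ey hx]]].
  have t0 : t = 0 by apply: height_inj; rewrite ey; ring.
  by move: hx; rewrite t0 subr0 mul1r mul0r addr0.
- move=> hx; exists (foot s, yI); split.
  + by apply/(on_perm_seg _ hs); exists 0; split; [lra | congr (_, _); ring].
  + exact/(on_interval_seg _ hu).
Qed.

Lemma meet_interval_interval (s u : seg R) :
  interval_seg_on yI s -> interval_seg_on yI u ->
  seg_meet s u <-> exists x, lo s <= x <= hi s /\ lo u <= x <= hi u.
Proof.
move=> hs hu; split.
- by move=> [p [/(on_interval_seg _ hs) [_ h1] /(on_interval_seg _ hu) [_ h2]]]; exists p.1.
- move=> [x [h1 h2]]; exists (x, yI).
  by split; [apply/(on_interval_seg _ hs) | apply/(on_interval_seg _ hu)].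
Qed.

Lemma seg_meet_sym (s u : seg R) : seg_meet s u -> seg_meet u s.
Proof. by move=> [p [h1 h2]]; exists p. Qed.

Lemma perm_not_interval (s : seg R) :
  perm_seg yI yO s -> interval_seg_on yI s -> False.
Proof.
by move=> [[_ e]|[e _]] [e1 [e2 _]]; move: yIO; rewrite -e ?e1 ?e2 eqxx.
Qed.

Definition lies_left (u x : seg R) : Prop :=
  (perm_seg yI yO u /\ foot u < foot x /\ top u < top x) \/
  (interval_seg_on yI u /\ hi u < foot x).
Definition lies_right (u x : seg R) : Prop :=
  (perm_seg yI yO u /\ foot x < foot u /\ top x < top u) \/
  (interval_seg_on yI u /\ foot x < lo u).

Lemma side_of_disjoint (x u : seg R) : perm_seg yI yO x ->
  perm_seg yI yO u \/ interval_seg_on yI u -> ~ seg_meet x u ->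
  lies_left u x \/ lies_right u x.
Proof.
move=> hx [hu|hu]; [rewrite (meet_perm_perm hx hu) | rewrite (meet_perm_interval hx hu)].
- move/negP; rewrite -ltNge => pos; case: (ltgtP (foot u) (foot x)) => c.
  + by left; left; split => //; split => //; nra.
  + by right; left; split => //; split => //; nra.
  + by move: pos; rewrite c subrr mul0r ltxx.
- move=> hm; case: (ltP (foot x) (lo u)) => c1; first by right; right.
  case: (ltP (hi u) (foot x)) => c2; first by left; right.
  by case: hm; rewrite c1 c2.
Qed.

Lemma sides_exclusive (u x : seg R) : lies_left u x -> lies_right u x -> False.
Proof.
move=> [[hu [a b]]|[hu a]] [[hu' [c d]]|[hu' c]].
- lra.
- exact: perm_not_interval hu hu'.
- exact: perm_not_interval hu' hu.
- by have := lo_le_hi u; lra.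
Qed.

Lemma sides_separate (x u w : seg R) :
  lies_left u x -> lies_right w x -> ~ seg_meet u w.
Proof.
move=> [[hu [a b]]|[hu a]] [[hw [c d]]|[hw c]].
- by rewrite (meet_perm_perm hu hw); nra.
- by rewrite (meet_perm_interval hu hw); lra.
- by move/seg_meet_sym; rewrite (meet_perm_interval hw hu); lra.
- by rewrite (meet_interval_interval hu hw) => -[z]; lra.
Qed.

Lemma right_left_swap (x u : seg R) : perm_seg yI yO x -> perm_seg yI yO u ->
  lies_right u x -> lies_left x u.
Proof.
move=> hx hu [[_ [a b]]|[hu' _]]; first by left.
by case: (perm_not_interval hu hu').
Qed.

Lemma left_right_swap (x u : seg R) : perm_seg yI yO x -> perm_seg yI yO u ->
  lies_left u x -> lies_right x u.
Proof.
move=> hx hu [[_ [a b]]|[hu' _]]; first by left.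
by case: (perm_not_interval hu hu').
Qed.
End PlanarGeometry.

Section CycleGeometry.
Variables (R : realFieldType) (yI yO : R) (n : nat) (V : nat -> seg R).
Hypothesis yIO : yI != yO.
Hypothesis n_ge4 : (3 < n)%N.
Hypothesis V_periodic : forall a b, (a %% n = b %% n)%N -> V a = V b.
Hypothesis V_kind : forall t, perm_seg yI yO (V t) \/ interval_seg_on yI (V t).
Hypothesis V_adj : forall t, seg_meet (V t) (V t.+1).
Hypothesis V_far : forall t e, (2 <= e <= n - 2)%N -> ~ seg_meet (V t) (V (t + e)).

Local Notation P t := (perm_seg yI yO (V t)).

Lemma interval_of_not_perm t : ~ P t -> interval_seg_on yI (V t).
Proof. by case: (V_kind t). Qed.

Lemma V_prev t : V (t + n - 1).+1 = V t.
Proof. by apply: V_periodic; rewrite -addn1 subnK ?modnDr //; lia. Qed.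

Lemma V_prev_adj t : seg_meet (V (t + n - 1)) (V t).
Proof. by rewrite -(V_prev t); apply: V_adj. Qed.

Lemma V_prev_far t : ~ seg_meet (V (t + n - 1)) (V t.+1).
Proof.
rewrite -(V_prev t.+1); have -> : ((t.+1 + n - 1).+1 = t + n - 1 + 2)%N by lia.
by apply: V_far; lia.
Qed.

(* Some segment is a permutation segment: otherwise the two neighbours of an
   interval whose right end is leftmost would both contain that end. *)
Lemma exists_perm : exists t, P t.
Proof.
apply: NNPP => noP.
have intv t : interval_seg_on yI (V t).
  by apply: interval_of_not_perm => Pt; apply: noP; exists t.
have n_gt0 : (0 < n)%N by lia.
case: (@arg_minP _ _ _ (Ordinal n_gt0) xpredT (fun j : 'I_n => hi (V j)) isT).
move=> m _ minm.
have {}minm t : hi (V m) <= hi (V t).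
  rewrite [V t](V_periodic (b := t %% n)) ?modn_mod //.
  exact: (minm (Ordinal (ltn_pmod t n_gt0))).
have [x [/andP[x1 x2] /andP[x3 x4]]] :=
  (meet_interval_interval (intv _) (intv _)).1 (V_adj m).
have [z [/andP[z1 z2] /andP[z3 z4]]] :=
  (meet_interval_interval (intv _) (intv _)).1 (V_prev_adj m).
apply: (@V_prev_far m); apply/(meet_interval_interval (intv _) (intv _)).
exists (hi (V m)); have := minm (m + n - 1)%N; have := minm m.+1.
by split; apply/andP; split; lra.
Qed.

(* An arc of permutation segments never consists of a single segment: the two
   interval segments around it would both contain its foot. *)
Lemma perm_no_singleton t : P t -> ~ P (t + n - 1) -> P (t + 1).
Proof.
move=> Pt prev_out; apply: NNPP => next_out.
have Iprev := interval_of_not_perm prev_out.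
have Inext := interval_of_not_perm next_out.
apply: (@V_prev_far t); rewrite -[t.+1]addn1 (meet_interval_interval Iprev Inext).
exists (foot yI (V t)); split.
- by rewrite -(meet_perm_interval yIO Pt Iprev); apply/seg_meet_sym/V_prev_adj.
- by rewrite -(meet_perm_interval yIO Pt Inext) addn1; apply: V_adj.
Qed.

(* Orientation of a permutation segment V x: the rest of the cycle, which avoids
   V x and is connected, lies to its right. *)
Definition far_right (x : nat) : Prop := lies_right yI yO (V (x + 2)) (V x).

Lemma side_persists x e : P x -> (2 <= e)%N -> (e < n - 2)%N ->
  (lies_right yI yO (V (x + e)) (V x) -> lies_right yI yO (V (x + e.+1)) (V x)) /\
  (lies_left yI yO (V (x + e)) (V x) -> lies_left yI yO (V (x + e.+1)) (V x)).
Proof.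
move=> Px e2 en.
have meet_next : seg_meet (V (x + e)) (V (x + e.+1)) by rewrite addnS; apply: V_adj.
have far_next : ~ seg_meet (V x) (V (x + e.+1)) by apply: V_far; lia.
have [L|Rt] := side_of_disjoint yIO Px (V_kind _) far_next.
- by split=> [hR|//]; case: (sides_separate yIO L hR (seg_meet_sym meet_next)).
- by split=> [//|hL]; case: (sides_separate yIO hL Rt meet_next).
Qed.

Lemma side_constant x e : P x -> (2 <= e <= n - 2)%N ->
  (far_right x -> lies_right yI yO (V (x + e)) (V x)) /\
  (lies_left yI yO (V (x + 2)) (V x) -> lies_left yI yO (V (x + e)) (V x)).
Proof.
move=> Px /andP[]; elim: e => [//|e IH].
rewrite leq_eqVlt => /orP[/eqP <- _|e2 en]; first by split.
have [persistR persistL] := side_persists Px e2 en.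
have [IHR IHL] := IH e2 (ltnW en).
by split=> h; [apply/persistR/IHR | apply/persistL/IHL].
Qed.

Lemma far_side x e : P x -> (2 <= e <= n - 2)%N ->
  (far_right x <-> lies_right yI yO (V (x + e)) (V x)) /\
  (~ far_right x <-> lies_left yI yO (V (x + e)) (V x)).
Proof.
move=> Px he; have [toR toL] := side_constant Px he.
have far2 : ~ seg_meet (V x) (V (x + 2)) by apply: V_far; lia.
have side2 := side_of_disjoint yIO Px (V_kind _) far2.
split; split=> [h|h].
- exact: toR.
- by case: side2 => // hL; case: (sides_exclusive yIO (toL hL) h).
- by case: side2 => [hL|hR]; [apply: toL | case: h].
- by move=> hR; apply: (sides_exclusive yIO h (toR hR)).
Qed.

(* Two permutation segments at distance in [2, n - 2] have opposite
   orientations: each lies on the far side of the other. *)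
Lemma far_right_flip x e : P x -> P (x + e) -> (2 <= e <= n - 2)%N ->
  (far_right x <-> ~ far_right (x + e)).
Proof.
move=> Px Pxe he.
have he' : (2 <= n - e <= n - 2)%N by lia.
have back : V (x + e + (n - e)) = V x.
  by apply: V_periodic; rewrite -addnA subnKC ?modnDr //; lia.
have Fx := far_side Px he; have Fxe := far_side Pxe he'; rewrite back in Fxe.
have farE : ~ seg_meet (V x) (V (x + e)) by apply: V_far.
case: (side_of_disjoint yIO Px (V_kind _) farE) => [hL|hR].
- by have := left_right_swap yIO Px Pxe hL; tauto.
- by have := right_left_swap yIO Px Pxe hR; tauto.
Qed.

(* The two segments of an arc of length 2 have opposite orientations: the
   interval segments around the arc contain the two feet, and a far side is
   determined by the order of these feet. *)
Lemma far_right_flip_pair i : P i -> P (i + 1) -> ~ P (i + n - 1) -> ~ P (i + 2) ->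
  (far_right i <-> ~ far_right (i + 1)).
Proof.
move=> Pi Pi1 prev_out next_out.
have Iprev := interval_of_not_perm prev_out.
have Inext := interval_of_not_perm next_out.
have /andP[prev_lo prev_hi] : lo (V (i + n - 1)) <= foot yI (V i) <= hi (V (i + n - 1)).
  by rewrite -(meet_perm_interval yIO Pi Iprev); apply/seg_meet_sym/V_prev_adj.
have /andP[next_lo next_hi] : lo (V (i + 2)) <= foot yI (V (i + 1)) <= hi (V (i + 2)).
  rewrite -(meet_perm_interval yIO Pi1 Inext).
  by have -> : (i + 2 = (i + 1).+1)%N by lia; apply: V_adj.
have [[toR _] [toL _]] := far_side Pi (ltac:(lia) : (2 <= 2 <= n - 2)%N).
have [[toR1 _] [toL1 _]] := far_side Pi1 (ltac:(lia) : (2 <= n - 2 <= n - 2)%N).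
have prev_eq : (i + 1 + (n - 2) = i + n - 1)%N by lia.
rewrite prev_eq in toR1 toL1.
have right_ab : far_right i -> foot yI (V i) < foot yI (V (i + 1)).
  by move/toR => [[hP _]|[_ lt]]; [case: next_out | lra].
have left_ba : ~ far_right i -> foot yI (V (i + 1)) < foot yI (V i).
  by move/toL => [[hP _]|[_ lt]]; [case: next_out | lra].
have right1_ba : far_right (i + 1) -> foot yI (V (i + 1)) < foot yI (V i).
  by move/toR1 => [[hP _]|[_ lt]]; [case: prev_out | lra].
have left1_ab : ~ far_right (i + 1) -> foot yI (V i) < foot yI (V (i + 1)).
  by move/toL1 => [[hP _]|[_ lt]]; [case: prev_out | lra].
split=> [fi fi1|nfi1]; first by have := right_ab fi; have := right1_ba fi1; lra.
by apply: NNPP => nfi; have := left_ba nfi; have := left1_ab nfi1; lra.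
Qed.

Lemma unique_short_perm_arc : (exists t, ~ P t) ->
  exists i k, arc n (fun t => P t) i k /\ (2 <= k <= 4)%N /\
    forall i' k', arc n (fun t => P t) i' k' -> i' = i /\ k' = k.
Proof.
move=> not_all; apply: unique_short_arc => //.
- by lia.
- by move=> a b /V_periodic ->.
- exact: exists_perm.
- exact: perm_no_singleton.
- exact: far_right_flip.
- exact: far_right_flip_pair.
Qed.
End CycleGeometry.

Theorem mainTheorem7 (R : realFieldType) (y1 y2 : R) (n : nat)
  (s : 'I_n -> seg R) :
  y1 != y2 ->
  (4 <= n)%N ->
  ipseg_star_model y1 y2 s ->
  represents_cycle s ->
  (exists i, interval_seg y1 y2 (s i)) ->
  exists i k, perm_arc y1 y2 s i k /\ (2 <= k <= 4)%N /\
    (forall i' k', perm_arc y1 y2 s i' k' -> i' = i /\ k' = k).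
Proof.
case: n s => [//|n] s y12 n4 [model [y [y_line star]]] cyc [j j_int].
have [yO [yIO perm_iff]] :
    exists yO, y != yO /\ forall u, perm_seg y1 y2 u <-> perm_seg y yO u.
  case: y_line => ->; first by exists y2.
  by exists y1; rewrite eq_sym; split => // u; apply: perm_seg_sym.
have kind t : perm_seg y yO (s (inZp t)) \/ interval_seg_on y (s (inZp t)).
  by case: (model (inZp t)) => [/star|/perm_iff]; [right | left].
have not_perm : exists t, ~ perm_seg y yO (s (inZp t)).
  exists j; have -> : inZp j = j by apply: val_inj; rewrite /= modn_small.
  by move=> Pj; apply: (perm_not_interval yIO Pj); apply: star.
have at_iff t : perm_seg y yO (s (inZp t)) <-> perm_at y1 y2 s t.
  split=> [Pt o ho | /(_ (inZp t) erefl) /perm_iff //].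
  by apply/perm_iff; have -> : o = inZp t by apply: val_inj.
have n_gt0 : (0 < n)%N by lia.
have [i [k [arc_ik [k24 unique]]]] := unique_short_perm_arc yIO n4
  (@cycle_periodic _ _ s) kind (cycle_adj n_gt0 cyc) (cycle_far n_gt0 cyc) not_perm.
exists i, k; split; first exact: arc_iff at_iff arc_ik.
by split=> // i' k' /(arc_iff (fun t => iff_sym (at_iff t))); apply: unique.
Qed.
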